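(* Suppose $U$ satisfies the Main Assumption and $\mu$ is strictly increasing in its $i$-th argument for some index $i$ (i.e. $\mu(\lambda+te_i)>\mu(\lambda)$ for all $\lambda\in\mathbb{R}^n_+$, $t>0$). Then for every extremal of problem (P) whose representation in Theorem 1 has $A_i=0$, we have $x_i\equiv y_i\equiv0$ (regardless of whether $\gamma=0$ or not).
   Context: Setting of Theorem 1: problem (P) on $\mathbb{H}_{2n+1}$ of minimizing $T$ over Lipschitz curves $(x,y,z)$ with $(x,y,z)(0)=0$, $(\dot x,\dot y)\in U$ a.e., $\dot z=\frac12\sum_i(x_i\dot y_i-\dot x_iy_i)$; extremal = projection of a Pontryagin maximum principle solution. Main Assumption: $U=\{(\dot x,\dot y):\mu(\mu_{\Omega_1}(\dot x_1,\dot y_1),\dots,\mu_{\Omega_n}(\dot x_n,\dot y_n))\le1\}$ with $\Omega_i\subset\mathbb{R}^2$ compact convex, $0\in\operatorname{int}\Omega_i$, $\mu_\Omega$ the Minkowski functional, and $\mu:\mathbb{R}^n_+\to\mathbb{R}_+$ continuous, convex, positively homogeneous, nondecreasing in each argument, positive outside $0$. Theorem 1 associates to each extremal constants $\gamma\in\{0,\pm1\}$, $A\in\mathbb{R}^n_+$ not both zero, with $A_i=s_{\Omega_i}(h_i,g_i)$ where $h_i=\varphi_i-\frac12\gamma y_i$, $g_i=\psi_i+\frac12\gamma x_i$ are built from the PMP covector $(\varphi,\psi,\gamma)$, and a measurable $\lambda(t)\in\arg\max_{\lambda\in\Xi}\sum_jA_j\lambda_j$, $\Xi=\{\lambda\in\mathbb{R}^n_+:\mu(\lambda)\le1\}$,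 with $\mu_{\Omega_i}(\dot x_i,\dot y_i)=\lambda_i(t)$. *)

From HB Require Import structures.
From mathcomp Require Import all_boot all_order all_algebra.
From mathcomp Require Import all_classical all_reals all_analysis.
Set Implicit Arguments. Unset Strict Implicit. Unset Printing Implicit Defensive.
Import Order.TTheory GRing.Theory Num.Theory.
Import numFieldNormedType.Exports.
Local Open Scope classical_set_scope.
Local Open Scope ring_scope.

Section Defs.
Variable R : realType.

Definition minkowski (Om : set (R * R)) (p : R * R) : R :=
  inf [set t : R | 0 < t /\ exists q, Om q /\ p = (t * q.1, t * q.2)].

Definition support_fun (Om : set (R * R)) (h g : R) : R :=
  sup [set h * q.1 + g * q.2 | q in Om].

Definition convex_set2 (Om : set (R * R)) : Prop :=
  forall p q, Om p -> Om q -> forall a : R, 0 <= a <= 1 ->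
    Om (a * p.1 + (1 - a) * q.1, a * p.2 + (1 - a) * q.2).

Definition good_Omega (Om : set (R * R)) : Prop :=
  compact Om /\ convex_set2 Om /\ nbhs (0 : R * R) Om.

Definition nonneg_vec (n : nat) (l : 'rV[R]_n) : Prop := forall j, 0 <= l ord0 j.

Definition unit_vec (n : nat) (i : 'I_n) : 'rV[R]_n := \row_j (j == i)%:R.

Definition good_mu (n : nat) (mu : 'rV[R]_n -> R) : Prop :=
  {within [set l | nonneg_vec l], continuous mu} /\
      (forall a b, nonneg_vec a -> nonneg_vec b -> forall t : R, 0 <= t <= 1 ->
          mu (t *: a + (1 - t) *: b) <= t * mu a + (1 - t) * mu b) /\
      (forall a (c : R), nonneg_vec a -> 0 < c -> mu (c *: a) = c * mu a) /\
      (forall a j (t : R), nonneg_vec a -> 0 <= t -> mu a <= mu (a + t *: unit_vec j)) /\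
      (forall a, nonneg_vec a -> 0 <= mu a) /\
      (forall a, nonneg_vec a -> a != 0 -> 0 < mu a).

(* the control set U of the Main Assumption: (u,v) = (xdot, ydot) *)
Definition in_U (n : nat) (Om : 'I_n -> set (R * R)) (mu : 'rV[R]_n -> R)
    (u v : 'I_n -> R) : Prop :=
  mu (\row_j minkowski (Om j) (u j, v j)) <= 1.

Definition lipschitz_on (T : R) (f : R -> R) : Prop :=
  exists L : R, forall s t, 0 <= s <= T -> 0 <= t <= T -> `|f s - f t| <= L * `|s - t|.

Definition hcov (phi y : R -> R) (gamma : R) (t : R) : R := phi t - gamma / 2 * y t.
Definition gcov (psi x : R -> R) (gamma : R) (t : R) : R := psi t + gamma / 2 * x t.

(* Hamiltonian  H = sum_i phi_i u_i + psi_i v_i + gamma/2 (x_i v_i - u_i y_i)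
                 = sum_i h_i u_i + g_i v_i *)
Definition hamiltonian (n : nat) (x y phi psi : 'I_n -> R -> R) (gamma t : R)
    (u v : 'I_n -> R) : R :=
  \sum_(j < n) (hcov (phi j) (y j) gamma t * u j + gcov (psi j) (x j) gamma t * v j).

(* (x,y,z) on [0,T] together with the covector (phi,psi,gamma) and p0 is a
   solution of the Pontryagin maximum principle for the time-optimal
   problem (P). *)
Definition PMP_solution (n : nat) (Om : 'I_n -> set (R * R)) (mu : 'rV[R]_n -> R)
    (T : R) (x y : 'I_n -> R -> R) (z : R -> R)
    (phi psi : 'I_n -> R -> R) (gamma : R) : Prop :=
  0 < T /\
  (forall j, lipschitz_on T (x j) /\ lipschitz_on T (y j)) /\ lipschitz_on T z /\
  (forall j, x j 0 = 0 /\ y j 0 = 0) /\ z 0 = 0 /\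
  (forall j, lipschitz_on T (phi j) /\ lipschitz_on T (psi j)) /\
  exists p0 : R, 0 <= p0 /\
  (forall t, 0 <= t <= T ->
     p0 != 0 \/ gamma != 0 \/ exists j, phi j t != 0 \/ psi j t != 0) /\
  {ae (@lebesgue_measure R), forall t, 0 <= t <= T ->
     exists u v : 'I_n -> R,
       (forall j, is_derive t (1 : R) (x j) (u j) /\ is_derive t (1 : R) (y j) (v j)) /\
       is_derive t (1 : R) z ((1 / 2) * \sum_(j < n) (x j t * v j - u j * y j t)) /\
       in_U Om mu u v /\
       (forall j, is_derive t (1 : R) (phi j) (- (gamma / 2) * v j) /\
                  is_derive t (1 : R) (psi j) ((gamma / 2) * u j)) /\
       (forall u' v', in_U Om mu u' v' ->
          hamiltonian x y phi psi gamma t u' v' <= hamiltonian x y phi psi gamma t u v) /\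
       hamiltonian x y phi psi gamma t u v = p0}.

End Defs.

From Pilot Require Import Defs.
From HB Require Import structures.
From mathcomp Require Import all_boot all_order all_algebra.
From mathcomp Require Import all_classical all_reals all_analysis.
From mathcomp Require Import measurable_realfun.
From mathcomp Require Import ring lra.
Import Order.TTheory GRing.Theory Num.Theory.
Import numFieldNormedType.Exports.
Local Open Scope classical_set_scope.
Local Open Scope ring_scope.
Set Implicit Arguments. Unset Strict Implicit. Unset Printing Implicit Defensive.

(* Since 0 is interior to Om_i, A_i = 0
   forces h_i = g_i = 0 identically (support_fun_eq0).  At almost every time
   the control (u, v) = (x', y') then satisfies u_i = v_i = 0:
   - if gamma != 0, differentiating h_i = 0 and g_i = 0 gives gamma v_i = 0
     and gamma u_i = 0 (normal_idle_control);
   - if gamma = 0, nontriviality of the covector yields some j with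
     (h_j, g_j) != 0, and a maximizer of the Hamiltonian cannot spend budget
     on coordinate i: transferring it to coordinate j (possible by strict
     monotonicity of mu and the Minkowski-gauge estimates) strictly increases
     the Hamiltonian (maximizer_idle_coordinate).
   Finally a Lipschitz function with zero derivative almost everywhere is
   constant (lipschitz_deriv0_const, proved by continuous induction), so
   x_i = y_i = 0.  The file develops these ingredients in this order:
   real analysis, planar convex geometry, the maximum condition, the PMP. *)

Lemma real_induction (R : realType) (P : R -> Prop) (a b : R) :
  a <= b -> P a ->
  (forall c, a < c <= b -> (forall r, a <= r < c -> P r) -> P c) ->
  (forall c, a <= c < b -> (forall r, a <= r <= c -> P r) ->
     exists2 d, 0 < d & forall r, c < r < c + d -> P r) ->
  forall t, a <= t <= b -> P t.
Proof.
move=> ab Pa Pclosed Pstep.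
pose S := [set s | a <= s <= b /\ forall r, a <= r <= s -> P r].
have Sa : S a.
  split=> [|r /andP[ar ra]]; first by rewrite lexx ab.
  by have -> : r = a by apply/eqP; rewrite eq_le ra ar.
have ubS : ubound S b by move=> s [/andP[]].
have hS : has_sup S by split; [exists a | exists b].
pose c := sup S.
have ac : a <= c := sup_upper_bound hS Sa.
have cb : c <= b by apply: ge_sup => //; exists a.
have below_c r : a <= r < c -> P r.
  move=> /andP[ar rc]; have rc0 : 0 < c - r by rewrite subr_gt0.
  have [s [_ Ps]] := sup_adherent rc0 hS.
  rewrite opprB addrC subrK => rs; apply: Ps; rewrite ar; exact: ltW.
have upto_c r : a <= r <= c -> P r.
  move=> /andP[ar]; rewrite le_eqVlt => /orP[/eqP->|rc]; last by apply: below_c; rewrite ar.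
  move: ac; rewrite le_eqVlt => /orP[/eqP<-//|ac'].
  by apply: Pclosed below_c; rewrite ac' cb.
have bc : b <= c.
  rewrite leNgt; apply/negP => cb'.
  have [d d0 Pd] := Pstep c (introT andP (conj ac cb')) upto_c.
  pose dm := Num.min d (b - c).
  have dm0 : 0 < dm by rewrite lt_min d0 subr_gt0.
  have [dmd dmb] : dm <= d /\ dm <= b - c by split; rewrite /dm ge_min lexx ?orbT.
  have Sc : S (c + dm / 2).
    split=> [|r /andP[ar rc]]; first by apply/andP; split; lra.
    have [rc'|cr] := leP r c; first by apply: upto_c; rewrite ar.
    by apply: Pd; rewrite cr /=; lra.
  have := sup_upper_bound hS Sc; rewrite -/c; lra.
by move=> t /andP[a_t tb]; apply: upto_c; rewrite a_t (le_trans tb bc).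
Qed.

Lemma deriv0_right_increment (R : realType) (f : R -> R) (c e : R) :
  is_derive c (1 : R) f 0 -> 0 < e ->
  exists2 d, 0 < d & forall r, c < r < c + d -> `|f r - f c| <= e * (r - c).
Proof.
move=> [df dv] e0.
move: df; rewrite /derivable /derive in dv *; rewrite dv => H.
have [d /= d0 Hd] := cvgr_dist_lt _ _ H _ e0.
exists d => // r /andP[cr rcd].
have hr : r - c != 0 by rewrite subr_eq0 gt_eqF.
have := Hd (r - c) _ hr.
rewrite /ball_ /= sub0r normrN gtr0_norm ?subr_gt0 // ltrBlDl => /(_ rcd).
rewrite sub0r normrN /GRing.scale /= mulr1 subrK normrM gtr0_norm ?invr_gt0 ?subr_gt0 //.
by rewrite ltr_pdivrMl ?subr_gt0 // mulrC => /ltW.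
Qed.

Lemma negligible_open_cover (R : realType) (N : set R) (e : R) :
  (@lebesgue_measure R).-negligible N -> 0 < e ->
  exists U, [/\ open U, N `<=` U & (@lebesgue_measure R U <= e%:E)%E].
Proof.
move=> /negligible_outer_measure N0 e0.
have [U [oU NU]] := outer_measure_open_le N e0.
by rewrite N0 add0e => Ue; exists U.
Qed.

Section CoveredLength.
Variables (R : realType) (U : set R).
Hypotheses (mU : measurable U) (U_fin : (@lebesgue_measure R U < +oo)%E).
Local Notation lambda := (@lebesgue_measure R).

Definition covered (s : R) : R := fine (lambda (U `&` `[0, s])).

Let mUs (s : R) : measurable (U `&` `[0, s]).
Proof. exact: measurableI. Qed.

Let covered_le_U (s : R) : (lambda (U `&` `[0%R, s]) <= lambda U)%E.
Proof.
by apply: le_measure; [rewrite inE; exact: mUs|rewrite inE|exact: subIsetl].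
Qed.

Let covered_fin (s : R) : lambda (U `&` `[0%R, s]) \is a fin_num.
Proof. by rewrite ge0_fin_numE // (le_lt_trans (covered_le_U s)). Qed.

Lemma covered_ge0 (s : R) : 0 <= covered s.
Proof. by rewrite /covered fine_ge0. Qed.

Lemma covered_le (e s : R) : (lambda U <= e%:E)%E -> covered s <= e.
Proof. by move=> Ue; rewrite /covered -lee_fin fineK // (le_trans (covered_le_U s)). Qed.

Lemma covered_mono (s r : R) : s <= r -> covered s <= covered r.
Proof.
move=> sr; rewrite /covered -lee_fin !fineK //.
apply: le_measure; [rewrite inE; exact: mUs|rewrite inE; exact: mUs|].
apply: setIS => x /=; rewrite !in_itv /= => /andP[-> xs] /=; exact: le_trans sr.
Qed.

Lemma covered_grow (c r : R) :
  0 <= c -> c <= r -> `]c, r] `<=` U -> covered c + (r - c) <= covered r.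
Proof.
move=> c0 cr cU; rewrite /covered -lee_fin EFinD !fineK //.
have <- : lambda `]c, r] = (r - c)%:E.
  rewrite lebesgue_measure_itv /= lte_fin.
  by move: cr; rewrite le_eqVlt => /orP[/eqP->|->]; rewrite ?ltxx ?subrr // -EFinD.
have disj : U `&` `[0%R, c] `&` `]c, r] = set0.
  apply/seteqP; split => // x [[_]] /=; rewrite !in_itv /= => /andP[_ xc] /andP[cx _].
  by move: (lt_le_trans cx xc); rewrite ltxx.
have mUc : measurable (U `&` `[0%R, c] `|` `]c, r]) by apply: measurableU.
rewrite -(measureU lambda (mUs c) (measurable_itv _) disj).
apply: le_measure; [rewrite inE; exact: mUc|rewrite inE; exact: mUs|].
move=> x [[Ux]|]; rewrite /= !in_itv /=.
  by move=> /andP[-> xc] /=; split => //; exact: le_trans xc cr.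
move=> /andP[cx xr]; split; first by apply: cU; rewrite /= in_itv /= cx.
by rewrite xr (le_trans c0 (ltW cx)).
Qed.
End CoveredLength.

(* For e > 0 cover the exceptional set (and the
   endpoint 0) by an open U of measure <= e; continuous induction then gives
   |f s - f 0| <= e s + L (measure of U within [0, s]) for all s in [0, T]:
   off U the derivative is 0, on U the Lipschitz bound is paid by the growth
   of the covered measure. *)
Section ZeroDerivative.
Variables (R : realType) (f : R -> R) (T L : R) (N : set R).
Hypotheses (T_gt0 : 0 < T)
  (f_lip : forall s t, 0 <= s <= T -> 0 <= t <= T -> `|f s - f t| <= L * `|s - t|)
  (N_negligible : (@lebesgue_measure R).-negligible N)
  (f_deriv0 : forall t, 0 < t < T -> ~ N t -> is_derive t (1 : R) f 0).

Let L_ge0 : 0 <= L.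
Proof.
have := @f_lip 0 T; rewrite !lexx ltW // sub0r normrN (gtr0_norm T_gt0).
move=> /(_ isT isT) H.
by have := le_trans (normr_ge0 _) H; rewrite pmulr_lge0.
Qed.

Let f_lip_right (s r : R) : 0 <= s -> s <= r -> r <= T -> `|f r - f s| <= L * (r - s).
Proof.
move=> s0 sr rT; rewrite -(ger0_norm (_ : 0 <= r - s)) ?subr_ge0 //.
by apply: f_lip; rewrite ?(le_trans s0 sr) ?(le_trans sr rT) ?rT ?s0.
Qed.

Section Creeping.
Variables (e : R) (U : set R).
Hypotheses (e_gt0 : 0 < e) (U_open : open U) (U_covers : N `|` [set 0] `<=` U)
  (U_small : (@lebesgue_measure R U <= e%:E)%E).

Let mU : measurable U. Proof. exact: open_measurable. Qed.

Let U_fin : (@lebesgue_measure R U < +oo)%E.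
Proof. exact: le_lt_trans U_small (ltry _). Qed.

Let P (s : R) := `|f s - f 0| <= e * s + L * covered U s.

Let creep_closed (c : R) : 0 < c <= T -> (forall r, 0 <= r < c -> P r) -> P c.
Proof.
move=> /andP[c0 cT] Pbelow; apply/ler_addgt0Pr => d d0.
pose s := Num.max 0 (c - d / (L + 1)).
have dL : 0 < d / (L + 1) by rewrite divr_gt0 // ltr_wpDl.
have [s0 sc] : 0 <= s /\ s < c by rewrite /s le_max lexx gt_max c0 ltrBlDr ltrDl dL.
have cs : c - s <= d / (L + 1) by rewrite lerBlDr addrC -lerBlDr /s le_max lexx orbT.
have Ps := Pbelow s (introT andP (conj s0 sc)); rewrite /P in Ps.
have Lcs : L * (c - s) <= d.
  apply: le_trans (_ : (c - s) * (L + 1) <= d); last by rewrite -ler_pdivlMr ?ltr_wpDl.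
  by rewrite mulrC ler_wpM2l ?lerDl // subr_ge0 ltW.
have fcs := f_lip_right s0 (ltW sc) cT.
have tri := ler_distD (f s) (f c) (f 0).
have es : e * s <= e * c by rewrite ler_wpM2l // ltW.
have Ls : L * covered U s <= L * covered U c by rewrite ler_wpM2l // (covered_mono mU U_fin (ltW sc)).
rewrite /P; lra.
Qed.

Let creep_step (c : R) : 0 <= c < T -> P c ->
  exists2 d, 0 < d & forall r, c < r < c + d -> P r.
Proof.
move=> /andP[c0 cT] Pc; rewrite /P in Pc.
have [Uc|notUc] := pselect (U c).
- have : nbhs c U by apply: open_nbhs_nbhs.
  move=> /nbhs_ballP[d /= d0 dU].
  exists (Num.min d (T - c)); first by rewrite lt_min d0 subr_gt0.
  move=> r /andP[cr]; rewrite -ltrBlDl lt_min => /andP[rcd rcT].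
  have cU : `]c, r] `<=` U.
    move=> x /=; rewrite in_itv /= => /andP[cx xr]; apply: dU.
    rewrite /ball /= ltr_norml; apply/andP; split; lra.
  have grow := covered_grow mU U_fin c0 (ltW cr) cU.
  have frc := f_lip_right c0 (ltW cr) (_ : r <= T).
  have tri := ler_distD (f c) (f r) (f 0).
  have Lgrow : L * covered U c + L * (r - c) <= L * covered U r by rewrite -mulrDr ler_wpM2l.
  have ecr : e * c <= e * r by rewrite ler_wpM2l // ltW.
  rewrite /P; have := frc (_ : r <= T); lra.
- have c_pos : 0 < c by rewrite lt_neqAle c0 andbT; apply: contra_notN notUc => /eqP <-; apply: U_covers; right.
  have notNc : ~ N c by move=> Nc; apply: notUc; apply: U_covers; left.
  have [d d0 small] := deriv0_right_increment (f_deriv0 (introT andP (conj c_pos cT)) notNc) e_gt0.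
  exists d => // r /andP[cr rcd].
  have frc := small r (introT andP (conj cr rcd)).
  have tri := ler_distD (f c) (f r) (f 0).
  have Lcr : L * covered U c <= L * covered U r by rewrite ler_wpM2l // (covered_mono mU U_fin (ltW cr)).
  rewrite /P; lra.
Qed.

Lemma increment_bound_cover (t : R) : 0 <= t <= T -> `|f t - f 0| <= e * T + L * e.
Proof.
move=> /andP[t0 tT].
have P0 : P 0 by rewrite /P subrr normr0 mulr0 add0r mulr_ge0 // covered_ge0.
have Pt : P t.
  apply: (@real_induction R P 0 T (ltW T_gt0) P0 creep_closed _ t); last by rewrite t0.
  move=> c cT Pupto; apply: (creep_step cT).
  by apply: Pupto; case/andP: cT => -> _; rewrite lexx.
have et : e * t <= e * T by rewrite ler_wpM2l // ltW.
have Le : L * covered U t <= L * e by rewrite ler_wpM2l // (covered_le mU U_fin _ U_small).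
rewrite /P in Pt; lra.
Qed.
End Creeping.

Lemma lipschitz_deriv0_const (t : R) : 0 <= t <= T -> f t = f 0.
Proof.
move=> tT; apply/eqP; rewrite -subr_eq0 -normr_eq0 eq_le normr_ge0 andbT.
apply/ler_addgt0Pr => d d0; rewrite add0r.
have TL0 : 0 < T + L by rewrite ltr_wpDr.
have e0 : 0 < d / (T + L) by rewrite divr_gt0.
have N0_negligible : (@lebesgue_measure R).-negligible (N `|` [set 0]).
  apply: negligibleU => //; apply/negligibleP; first exact: measurable_set1.
  exact: lebesgue_measure_set1.
have [U [oU NU Ue]] := negligible_open_cover N0_negligible e0.
have := increment_bound_cover e0 oU NU Ue tT.
suff -> : d / (T + L) * T + L * (d / (T + L)) = d by [].
by field; rewrite gt_eqF.
Qed.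
End ZeroDerivative.

(* Planar convex geometry: the sets Om_i of the Main Assumption. *)

Lemma ball0_pair (R : realType) (r a b : R) :
  `|a| < r -> `|b| < r -> ball (0 : R * R) r (a, b).
Proof. by move=> ha hb; split; rewrite /ball /= sub0r normrN. Qed.

Lemma compact_coord_bounded (R : realType) (Om : set (R * R)) : compact Om ->
  exists2 M, 0 < M & forall q, Om q -> `|q.1| <= M /\ `|q.2| <= M.
Proof.
move=> /compact_bounded [M0 [_ HM]].
have M1 : M0 < `|M0| + 1 by rewrite (le_lt_trans (ler_norm _)) // ltrDl.
exists (`|M0| + 1); first by rewrite ltr_wpDl.
move=> q /(HM _ M1) /= Hq; split; apply: le_trans Hq;
  by rewrite [X in _ <= X]/(Num.norm _) /= le_max lexx ?orbT.
Qed.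

(* If 0 is interior to a bounded Om, the support function vanishes only at
   the zero covector: testing against the point d (h, g) of Om gives
   d (h^2 + g^2) <= 0. *)
Lemma support_fun_eq0 (R : realType) (Om : set (R * R)) (h g : R) :
  compact Om -> nbhs (0 : R * R) Om -> support_fun Om h g = 0 -> h = 0 /\ g = 0.
Proof.
move=> cO /nbhs_ballP [r /= r0 rO] s0.
have [M M0 HM] := compact_coord_bounded cO.
pose K := `|h| + `|g| + 1.
have K0 : 0 < K by rewrite ltr_wpDl ?addr_ge0.
pose d := r / (2 * K).
have d0 : 0 < d by rewrite divr_gt0 // mulr_gt0.
have dK : d * K < r.
  have -> : d * K = r / 2 by rewrite /d; field; rewrite gt_eqF.
  lra.
have Oq : Om (d * h, d * g).
  apply: rO; apply: ball0_pair; rewrite normrM gtr0_norm //; apply: le_lt_trans dK;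
  rewrite ler_wpM2l ?ltW // /K; have := normr_ge0 h; have := normr_ge0 g; lra.
have hS : has_sup [set h * q.1 + g * q.2 | q in Om].
  split; first by exists (h * (d * h) + g * (d * g)), (d * h, d * g).
  exists (`|h| * M + `|g| * M) => _ [q Oq' <-].
  have [H1 H2] := HM q Oq'.
  apply: le_trans (ler_norm _) _; apply: le_trans (ler_normD _ _) _.
  by rewrite !normrM lerD // ler_wpM2l.
have := sup_upper_bound hS (ex_intro2 _ _ (d * h, d * g) Oq erefl).
rewrite -/(support_fun Om h g) s0 /= => H.
have hg0 : d * (h ^+ 2 + g ^+ 2) <= 0.
  by apply: le_trans H; rewrite le_eqVlt; apply/orP; left; apply/eqP; ring.
have hh := sqr_ge0 h; have gg := sqr_ge0 g.
have : h ^+ 2 + g ^+ 2 <= 0 by rewrite -(pmulr_rle0 _ d0).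
move=> sum0; have Hh : h ^+ 2 = 0 by lra.
have Hg : g ^+ 2 = 0 by lra.
by split; apply/eqP; rewrite -sqrf_eq0; apply/eqP.
Qed.

Section Minkowski.
Variables (R : realType) (Om : set (R * R)).
Hypothesis Om_nbhs0 : nbhs (0 : R * R) Om.

Let scalings (p : R * R) :=
  [set t : R | 0 < t /\ exists q, Om q /\ p = (t * q.1, t * q.2)].

Let square_in : exists2 r : R, 0 < r & forall a b, `|a| < r -> `|b| < r -> Om (a, b).
Proof.
case/nbhs_ballP: Om_nbhs0 => r /= r0 rO.
by exists r => // a b ha hb; apply: rO; apply: ball0_pair.
Qed.

Let scalings_lb0 p : lbound (scalings p) 0.
Proof. by move=> t [t0 _]; exact: ltW. Qed.

Let in_scalings p t (r : R) : 0 < r -> (forall a b, `|a| < r -> `|b| < r -> Om (a, b)) ->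
  0 < t -> `|p.1| < t * r -> `|p.2| < t * r -> scalings p t.
Proof.
move=> r0 rO t0 h1 h2; split => //; exists (p.1 / t, p.2 / t); split.
  have ti : `|t^-1| = t^-1 by rewrite gtr0_norm ?invr_gt0.
  by apply: rO; rewrite normrM ti ltr_pdivrMr // mulrC.
by case: p h1 h2 => a b /= _ _; congr pair; field; rewrite gt_eqF.
Qed.

Let scalings_ne p : scalings p !=set0.
Proof.
have [r r0 rO] := square_in.
pose t := (`|p.1| + `|p.2| + 1) / r.
have t0 : 0 < t by rewrite divr_gt0 // ltr_wpDl ?addr_ge0.
have tr : t * r = `|p.1| + `|p.2| + 1 by rewrite /t; field; rewrite gt_eqF.
exists t; apply: (in_scalings r0 rO t0); rewrite tr;
  have := normr_ge0 p.1; have := normr_ge0 p.2; lra.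
Qed.

Lemma minkowski_ge0 p : 0 <= Defs.minkowski Om p.
Proof. exact: lb_le_inf (scalings_ne p) (@scalings_lb0 p). Qed.

Lemma minkowski0 : Defs.minkowski Om (0, 0) = 0.
Proof.
apply/eqP; rewrite eq_le minkowski_ge0 andbT.
apply/ler_addgt0Pr => e e0; rewrite add0r.
have [r r0 rO] := square_in.
apply: (ge_inf (ex_intro _ 0 (@scalings_lb0 (0, 0)))).
by apply: (in_scalings r0 rO e0); rewrite /= normr0 mulr_gt0.
Qed.

Lemma minkowski_gt0 p : compact Om -> p != (0, 0) -> 0 < Defs.minkowski Om p.
Proof.
move=> cO p0; have [M M0 HM] := compact_coord_bounded cO.
have pp : 0 < `|p.1| + `|p.2|.
  case: p p0 => a b /= ab; rewrite lt_neqAle addr_ge0 // andbT.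
  apply: contra ab => /eqP/esym H.
  have Ha : `|a| = 0 by have := normr_ge0 a; have := normr_ge0 b; lra.
  have Hb : `|b| = 0 by have := normr_ge0 a; have := normr_ge0 b; lra.
  by move: Ha Hb => /normr0_eq0 -> /normr0_eq0 ->.
apply: lt_le_trans (_ : (`|p.1| + `|p.2|) / (2 * M) <= _).
  by rewrite divr_gt0 // mulr_gt0.
apply: lb_le_inf (scalings_ne p) _ => t [t0 [q [Oq ->]]] /=.
have [H1 H2] := HM q Oq.
rewrite ler_pdivrMr ?mulr_gt0 // !normrM gtr0_norm //.
have : t * `|q.1| <= t * M by rewrite ler_wpM2l // ltW.
have : t * `|q.2| <= t * M by rewrite ler_wpM2l // ltW.
lra.
Qed.

(* Moving p by s w raises the gauge by at most s K: write p + s w as a convex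
   combination of a point of (a) Om and of the point w / K of Om. *)
Lemma minkowski_shift (w : R * R) : convex_set2 Om -> exists2 K : R, 0 <= K &
  forall p (s : R), 0 < s ->
    Defs.minkowski Om (p.1 + s * w.1, p.2 + s * w.2) <= Defs.minkowski Om p + s * K.
Proof.
move=> cvx; have [r r0 rO] := square_in.
pose K := (`|w.1| + `|w.2| + 1) / r.
have K0 : 0 < K by rewrite divr_gt0 // ltr_wpDl ?addr_ge0.
have Ow : Om (w.1 / K, w.2 / K).
  have Kr : K * r = `|w.1| + `|w.2| + 1 by rewrite /K; field; rewrite gt_eqF.
  have Ki : `|K^-1| = K^-1 by rewrite gtr0_norm ?invr_gt0.
  apply: rO; rewrite normrM Ki ltr_pdivrMr // mulrC Kr;
  have := normr_ge0 w.1; have := normr_ge0 w.2; lra.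
exists K => [|p s s0]; first exact: ltW.
apply/ler_addgt0Pr => e e0.
have [a [a0 [q [Oq pq]]] ae] :=
  inf_adherent e0 (conj (scalings_ne p) (ex_intro _ 0 (@scalings_lb0 p))).
have sK0 : 0 < a + s * K by rewrite addr_gt0 // mulr_gt0.
have : scalings (p.1 + s * w.1, p.2 + s * w.2) (a + s * K).
  split => //; pose al := a / (a + s * K).
  have al0 : 0 <= al by rewrite /al divr_ge0 // ltW.
  have al1 : al <= 1 by rewrite /al ler_pdivrMr // mul1r lerDl mulr_ge0 // ltW.
  have al01 : 0 <= al <= 1 by rewrite al0 al1.
  exists (al * q.1 + (1 - al) * (w.1 / K), al * q.2 + (1 - al) * (w.2 / K)).
  split; first exact: (cvx _ _ Oq Ow _ al01).
  by rewrite pq /= /al; congr pair; field; rewrite ?gt_eqF.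
move=> /(ge_inf (ex_intro _ 0 (@scalings_lb0 _))) H.
apply: le_trans H _; rewrite -/(Defs.minkowski Om p); lra.
Qed.
End Minkowski.

(* The maximum condition. *)

(* Dropping the i-th coordinate of lam strictly lowers mu, so a little mass
   can be added in any direction j while staying strictly below 1. *)
Lemma budget_transfer (R : realType) (n : nat) (mu : 'rV[R]_n -> R) (i j : 'I_n)
    (lam : 'rV[R]_n) :
  good_mu mu ->
  (forall (l : 'rV[R]_n) (t : R), nonneg_vec l -> 0 < t ->
     mu l < mu (l + t *: unit_vec R i)) ->
  nonneg_vec lam -> 0 < lam ord0 i -> mu lam <= 1 ->
  let l := \row_k (if k == i then 0 else lam ord0 k) in
  nonneg_vec l /\ exists2 al, 0 < al & mu (l + al *: unit_vec R j) < 1.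
Proof.
move=> [_ [cvx [_ [_ [mu_ge0 _]]]]] smono lam_nn lami lam1 l.
have l_nn : nonneg_vec l by move=> k; rewrite mxE; case: ifP.
split=> //.
have lE : l + lam ord0 i *: unit_vec R i = lam.
  apply/rowP => k; rewrite !mxE; case: (eqVneq k i) => [->|ki]; first by rewrite mulr1 add0r.
  by rewrite mulr0 addr0.
have ml1 : mu l < 1 by apply: lt_le_trans (smono _ _ l_nn lami) _; rewrite lE.
pose a := l + 1 *: unit_vec R j.
have a_nn : nonneg_vec a.
  by move=> k; rewrite !mxE mul1r addr_ge0 ?ler0n //; case: ifP.
pose D := `|mu a - mu l| + 1.
have D0 : 0 < D by rewrite ltr_wpDl.
have mul0 : 0 <= mu l by exact: mu_ge0.
pose al := (1 - mu l) / (2 * D).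
have al0 : 0 < al by rewrite divr_gt0 ?mulr_gt0 // subr_gt0.
have alD : al * D = (1 - mu l) / 2 by rewrite /al; field; rewrite gt_eqF.
have al1 : al <= 1.
  have : al * D <= D.
    by rewrite alD; have := normr_ge0 (mu a - mu l); rewrite /D; lra.
  by rewrite ger_pMl.
exists al => //.
have -> : l + al *: unit_vec R j = al *: a + (1 - al) *: l.
  by apply/rowP => k; rewrite !mxE; ring.
apply: le_lt_trans (cvx _ _ a_nn l_nn al _) _; first by rewrite (ltW al0) al1.
have : al * (mu a - mu l) <= al * D.
  by rewrite ler_wpM2l ?(ltW al0) // /D; apply: le_trans (ler_norm _) _; lra.
rewrite alD; lra.
Qed.

Definition transfer (R : realType) (n : nat) (i j : 'I_n) (s : R) (w u : 'I_n -> R)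
    : 'I_n -> R :=
  fun k => if k == i then 0 else if k == j then u k + s * w k else u k.

Lemma transfer_gain (R : realType) (n : nat) (i j : 'I_n) (s : R) (h g u v : 'I_n -> R) :
  j != i -> h i = 0 -> g i = 0 ->
  \sum_(k < n) (h k * transfer i j s h u k + g k * transfer i j s g v k) =
  \sum_(k < n) (h k * u k + g k * v k) + s * (h j ^+ 2 + g j ^+ 2).
Proof.
move=> ji hi gi.
rewrite [LHS](bigD1 j) // [in RHS](bigD1 j) //= /transfer (negbTE ji) eqxx.
rewrite (eq_bigr (fun k => h k * u k + g k * v k)); first by ring.
move=> k kj; rewrite /transfer (negbTE kj); case: eqP => // ->.
by rewrite hi gi !mul0r !addr0.
Qed.

Lemma maximizer_idle_coordinate (R : realType) (n : nat) (Om : 'I_n -> set (R * R))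
    (mu : 'rV[R]_n -> R) (i : 'I_n) (h g u v : 'I_n -> R) :
  (forall j, good_Omega (Om j)) -> good_mu mu ->
  (forall (l : 'rV[R]_n) (t : R), nonneg_vec l -> 0 < t ->
     mu l < mu (l + t *: unit_vec R i)) ->
  in_U Om mu u v ->
  (forall u' v', in_U Om mu u' v' ->
     \sum_(k < n) (h k * u' k + g k * v' k) <= \sum_(k < n) (h k * u k + g k * v k)) ->
  h i = 0 -> g i = 0 -> (exists j, (h j, g j) != (0, 0)) ->
  u i = 0 /\ v i = 0.
Proof.
move=> gO gmu smono uU u_max hi gi [j hj].
have ji : j != i by apply: contraNneq hj => ->; rewrite hi gi.
case: (eqVneq (u i, v i) (0, 0)) => [[-> ->] // | uv_i]; exfalso.
pose lam : 'rV[R]_n := \row_k Defs.minkowski (Om k) (u k, v k).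
have [cO [cvxO nO]] := gO i.
have lam_nn : nonneg_vec lam by move=> k; rewrite mxE; apply: minkowski_ge0; case: (gO k) => _ [].
have lami : 0 < lam ord0 i by rewrite mxE minkowski_gt0.
have [l_nn [al al0 mu_al]] := budget_transfer j gmu smono lam_nn lami uU.
set l := \row_k _ in l_nn mu_al.
have [_ [cvxj nj]] := gO j.
have [K K0 shiftK] := minkowski_shift nj (h j, g j) cvxj.
pose s := al / (K + 1).
have s0 : 0 < s by rewrite divr_gt0 // ltr_wpDl.
have sK : s * K <= al.
  rewrite /s mulrAC ler_pdivrMr ?ltr_wpDl // ler_wpM2l ?(ltW al0) //; lra.
pose u' := transfer i j s h u; pose v' := transfer i j s g v.
pose r := \row_k Defs.minkowski (Om k) (u' k, v' k).
have r_nn : nonneg_vec r by move=> k; rewrite mxE; apply: minkowski_ge0; case: (gO k) => _ [].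
have rj : r ord0 j <= lam ord0 j + al.
  rewrite !mxE /u' /v' /transfer (negbTE ji) eqxx.
  by apply: le_trans (shiftK (u j, v j) s s0) _; rewrite lerD2l.
have rE : r + (lam ord0 j + al - r ord0 j) *: unit_vec R j = l + al *: unit_vec R j.
  apply/rowP => k; rewrite !mxE; case: (eqVneq k j) => [->|kj].
    by rewrite (negbTE ji) !mulr1; ring.
  rewrite !mulr0 !addr0 /u' /v' /transfer; case: (eqVneq k i) => [->|ki].
    by case: (gO i) => _ [_ nOi]; rewrite minkowski0.
  by rewrite (negbTE kj).
have uU' : in_U Om mu u' v'.
  case: gmu => _ [_ [_ [mono _]]].
  have d0 : 0 <= lam ord0 j + al - r ord0 j by rewrite subr_ge0.
  by rewrite /in_U -/r; apply: le_trans (mono _ j _ r_nn d0) _; rewrite rE ltW.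
have hg : 0 < h j ^+ 2 + g j ^+ 2.
  rewrite lt_neqAle addr_ge0 ?sqr_ge0 // andbT; apply: contra hj => /eqP/esym H.
  have Hh : h j ^+ 2 = 0 by have := sqr_ge0 (h j); have := sqr_ge0 (g j); lra.
  have Hg : g j ^+ 2 = 0 by have := sqr_ge0 (h j); have := sqr_ge0 (g j); lra.
  by move: Hh Hg => /eqP; rewrite sqrf_eq0 => /eqP -> /eqP; rewrite sqrf_eq0 => /eqP ->.
have := u_max _ _ uU'; rewrite transfer_gain //.
have : 0 < s * (h j ^+ 2 + g j ^+ 2) by rewrite mulr_gt0.
lra.
Qed.

Lemma deriv_vanishing_interior (R : realType) (F : R -> R) (T s a : R) :
  0 < s < T -> (forall r, 0 <= r <= T -> F r = 0) -> is_derive s (1 : R) F a -> a = 0.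
Proof.
move=> /andP[s0 sT] F0 [_ <-].
have : \near s, (cst 0 : R -> R) s = F s.
  apply/nbhs_ballP; exists (Num.min s (T - s)) => /=; first by rewrite lt_min s0 subr_gt0.
  move=> r; rewrite /ball /= lt_min !ltr_norml => /andP[/andP[h1 h1'] /andP[h2 h2']].
  by rewrite F0 //; apply/andP; split; lra.
by move=> /near_eq_is_derive /(_ (is_derive_cst 0 s 1)) [].
Qed.

(* The PMP along an extremal, at a time s: in the abnormal case gamma = 0 the
   nontriviality of (p0, covector) forces some (h_j, g_j) to be nonzero, since
   otherwise the Hamiltonian p0 vanishes and phi = h, psi = g vanish too. *)
Lemma abnormal_covector_nonzero (R : realType) (n : nat) (x y phi psi : 'I_n -> R -> R)
    (gamma p0 s : R) (u v : 'I_n -> R) :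
  (p0 != 0 \/ gamma != 0 \/ exists j, phi j s != 0 \/ psi j s != 0) ->
  hamiltonian x y phi psi gamma s u v = p0 -> gamma = 0 ->
  exists j, (hcov (phi j) (y j) gamma s, gcov (psi j) (x j) gamma s) != (0, 0).
Proof.
move=> nontriv H_p0 g0; apply: contrapT => all0.
have hg0 j : hcov (phi j) (y j) gamma s = 0 /\ gcov (psi j) (x j) gamma s = 0.
  by case: (eqVneq (hcov (phi j) (y j) gamma s, gcov (psi j) (x j) gamma s) (0, 0))
    => [[-> ->] // | hj]; exfalso; apply: all0; exists j.
have p00 : p0 = 0.
  by rewrite -H_p0 /hamiltonian big1 // => j _; have [-> ->] := hg0 j; rewrite !mul0r addr0.
move: nontriv; rewrite p00 g0 eqxx => -[//|[//|[j]]].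
have [] := hg0 j; rewrite /hcov /gcov g0 !mul0r subr0 addr0 => -> ->.
by rewrite eqxx; case.
Qed.

(* In the normal case gamma != 0, h_i = phi_i - gamma/2 y_i and
   g_i = psi_i + gamma/2 x_i vanish identically, so their derivatives
   - gamma v_i and gamma u_i vanish at interior times. *)
Lemma normal_idle_control (R : realType) (T s gamma : R) (x y phi psi : R -> R) (u v : R) :
  gamma != 0 -> 0 < s < T ->
  (forall r, 0 <= r <= T -> hcov phi y gamma r = 0 /\ gcov psi x gamma r = 0) ->
  is_derive s (1 : R) x u -> is_derive s (1 : R) y v ->
  is_derive s (1 : R) phi (- (gamma / 2) * v) -> is_derive s (1 : R) psi ((gamma / 2) * u) ->
  u = 0 /\ v = 0.
Proof.
move=> gn0 sT hg0 dx dy dphi dpsi.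
have dh : is_derive s (1 : R) (hcov phi y gamma) (- (gamma / 2) * v - gamma / 2 * v).
  exact: is_deriveB.
have dg : is_derive s (1 : R) (gcov psi x gamma) (gamma / 2 * u + gamma / 2 * u).
  exact: is_deriveD.
have /eqP hv := deriv_vanishing_interior sT (fun r rT => (hg0 r rT).1) dh.
have /eqP gu := deriv_vanishing_interior sT (fun r rT => (hg0 r rT).2) dg.
have : gamma * v == 0 by rewrite -oppr_eq0 -(eqP hv); apply/eqP; field.
have : gamma * u == 0 by rewrite -(eqP gu); apply/eqP; field.
by rewrite !mulf_eq0 (negbTE gn0) /= => /eqP -> /eqP ->.
Qed.

Unset Implicit Arguments.

Theorem mainTheorem5 (R : realType) (n : nat) (Om : 'I_n -> set (R * R))
    (mu : 'rV[R]_n -> R) (i : 'I_n) :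
  (forall j, good_Omega (Om j)) ->
  good_mu mu ->
  (forall (l : 'rV[R]_n) (t : R), nonneg_vec l -> 0 < t ->
     mu l < mu (l + t *: unit_vec R i)) ->
  forall (T : R) (x y : 'I_n -> R -> R) (z : R -> R)
         (phi psi : 'I_n -> R -> R) (gamma : R),
  PMP_solution Om mu T x y z phi psi gamma ->
  (forall t, 0 <= t <= T ->
     support_fun (Om i) (hcov (phi i) (y i) gamma t) (gcov (psi i) (x i) gamma t) = 0) ->
  forall t, 0 <= t <= T -> x i t = 0 /\ y i t = 0.
Proof.
move=> gO gmu smono T x y z phi psi gamma
  [T0 [Lxy [_ [init [_ [_ [p0 [_ [nontriv [N [mN N0 NPMP]]]]]]]]]]] supp0.
have hg0 r : 0 <= r <= T ->
    hcov (phi i) (y i) gamma r = 0 /\ gcov (psi i) (x i) gamma r = 0.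
  by move=> rT; have [cO [_ nO]] := gO i; exact: support_fun_eq0 cO nO (supp0 r rT).
have N_negl : (@lebesgue_measure R).-negligible N by exists N; split.
have idle s : 0 < s < T -> ~ N s -> exists u v : 'I_n -> R,
    [/\ is_derive s (1 : R) (x i) (u i), is_derive s (1 : R) (y i) (v i), u i = 0 & v i = 0].
  move=> sT Ns; have sT' : 0 <= s <= T by case/andP: sT => /ltW -> /ltW ->.
  have [u [v [dxy [_ [uU [dpp [u_max H_p0]]]]]]] := contrapT (fun h => Ns (NPMP s h)) sT'.
  exists u, v; have [dx dy] := dxy i; have [dphi dpsi] := dpp i.
  have [ui vi] : u i = 0 /\ v i = 0.
    have [g0|gn0] := eqVneq gamma 0; last exact: normal_idle_control gn0 sT hg0 dx dy dphi dpsi.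
    have [hi gi] := hg0 s sT'.
    exact: maximizer_idle_coordinate gO gmu smono uU u_max hi gi
      (abnormal_covector_nonzero (nontriv s sT') H_p0 g0).
  by split.
move=> t tT; have [[Lx fx] [Ly fy]] := Lxy i; have [x0 y0] := init i.
split.
- rewrite -x0; apply: (lipschitz_deriv0_const T0 fx N_negl _ tT) => s sT Ns.
  by have [u [v [dx _ <- _]]] := idle s sT Ns.
- rewrite -y0; apply: (lipschitz_deriv0_const T0 fy N_negl _ tT) => s sT Ns.
  by have [u [v [_ dy _ <-]]] := idle s sT Ns.
Qed.
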